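(* Let $(X_f,G)$ be a semicocycle extension (with $K$-valued semicocycle $f$) of a minimal equicontinuous system $(\mathbb{T},G)$. Then $(X_f,G)$ is non-null if and only if there are disjoint compact sets $V_0,V_1\subseteq K$ such that for every $\ell\in\mathbb{N}$ there is a finite sequence $(g_i)_{i=1,\dots,\ell}$ in $G$ such that for every $a\in\{0,1\}^\ell$ there is $x\in X_f$ with $x_{g_i}\in V_{a_i}$ for $i=1,\dots,\ell$.
   Context: Semicocycle setting: $G$ topological group acting jointly continuously, minimally and equicontinuously on compact Hausdorff $\mathbb{T}$; $K$ compact Hausdorff; $f\colon G\theta_0\to K$ continuous with $\overline{G\theta_0}=\mathbb{T}$ and invariant under no rotation; $X_f\subseteq K^G$ is the closure of $\{\sigma^hf:h\in G\}$ where $f\equiv(f(g\theta_0))_{g\in G}$ and $\sigma^h((x_g)_g)=(x_{gh})_g$. Independence: for $A_0,A_1\subseteq X_f$, a set $J\subseteq G$ is an independence set for $(A_0,A_1)$ if for every finite $I\subseteq J$ and every $a\in\{0,1\}^I$, $\bigcap_{i\in I}\sigma^{i^{-1}}A_{a_i}\neq\emptyset$. A pair $(x_0,x_1)$ is an IN-pair if for all neighbourhoods $U_0\ni x_0$, $U_1\ni x_1$ the pair $(U_0,U_1)$ has finite independence sets of arbitrarily large cardinality. The system is null iff it has no IN-pair $(x_0,x_1)$ with $x_0\neq x_1$ (equivalently, it has zero topological sequence entropy), and non-null otherwise. *)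

From Stdlib Require Import List Arith.
Import ListNotations.
Set Implicit Arguments.

Definition set (T : Type) := T -> Prop.

Definition is_topology {T : Type} (op : set T -> Prop) : Prop :=
  op (fun _ => True) /\
  (forall U V, op U -> op V -> op (fun x => U x /\ V x)) /\
  (forall (I : Type) (F : I -> set T), (forall i, op (F i)) ->
      op (fun x => exists i, F i x)).

Definition prod_open {A B : Type} (opA : set A -> Prop) (opB : set B -> Prop)
  (U : set (A * B)) : Prop :=
  forall p, U p -> exists Ua Ub, opA Ua /\ opB Ub /\ Ua (fst p) /\ Ub (snd p) /\
    (forall a b, Ua a -> Ub b -> U (a, b)).

Definition pow_open {I K : Type} (opK : set K -> Prop) (U : set (I -> K)) : Prop :=
  forall x, U x -> exists (l : list I) (V : I -> set K),
    (forall i, In i l -> opK (V i) /\ V i (x i)) /\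
    (forall y, (forall i, In i l -> V i (y i)) -> U y).

Definition nbhd {T : Type} (op : set T -> Prop) (x : T) (N : set T) : Prop :=
  exists U, op U /\ U x /\ (forall y, U y -> N y).

Definition closure {T : Type} (op : set T -> Prop) (S : set T) : set T :=
  fun x => forall U, op U -> U x -> exists y, U y /\ S y.

Definition continuous {A B : Type} (opA : set A -> Prop) (opB : set B -> Prop)
  (f : A -> B) : Prop := forall V, opB V -> opA (fun x => V (f x)).

Definition continuous_on {A B : Type} (opA : set A -> Prop) (opB : set B -> Prop)
  (S : set A) (f : A -> B) : Prop :=
  forall x, S x -> forall V, opB V -> V (f x) ->
    exists U, opA U /\ U x /\ (forall y, S y -> U y -> V (f y)).

Definition hausdorff {T : Type} (op : set T -> Prop) : Prop :=
  forall x y, x <> y -> exists U V, op U /\ op V /\ U x /\ V y /\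
    (forall z, U z -> V z -> False).

Definition compact_set {T : Type} (op : set T -> Prop) (A : set T) : Prop :=
  forall (I : Type) (F : I -> set T), (forall i, op (F i)) ->
    (forall x, A x -> exists i, F i x) ->
    exists l : list I, forall x, A x -> exists i, In i l /\ F i x.

Definition compact {T : Type} (op : set T -> Prop) : Prop :=
  compact_set op (fun _ => True).

Definition is_group {G : Type} (mul : G -> G -> G) (inv : G -> G) (e : G) : Prop :=
  (forall a b c, mul a (mul b c) = mul (mul a b) c) /\
  (forall a, mul e a = a) /\ (forall a, mul a e = a) /\
  (forall a, mul (inv a) a = e) /\ (forall a, mul a (inv a) = e).

Definition topological_group {G : Type} (opG : set G -> Prop)
  (mul : G -> G -> G) (inv : G -> G) (e : G) : Prop :=
  is_topology opG /\ is_group mul inv e /\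
  continuous (prod_open opG opG) opG (fun p => mul (fst p) (snd p)) /\
  continuous opG opG inv.

Definition is_action {G T : Type} (mul : G -> G -> G) (e : G) (act : G -> T -> T) : Prop :=
  (forall x, act e x = x) /\ (forall g h x, act (mul g h) x = act g (act h x)).

Definition jointly_continuous {G T : Type} (opG : set G -> Prop) (opT : set T -> Prop)
  (act : G -> T -> T) : Prop :=
  continuous (prod_open opG opT) opT (fun p => act (fst p) (snd p)).

Definition orbit {G T : Type} (act : G -> T -> T) (x : T) : set T :=
  fun y => exists g, y = act g x.

Definition minimal {G T : Type} (opT : set T -> Prop) (act : G -> T -> T) : Prop :=
  forall x y, closure opT (orbit act x) y.

(* neighbourhoods of the diagonal = entourages of the unique uniformity of a
   compact Hausdorff space *)
Definition diag_nbhd {T : Type} (opT : set T -> Prop) (W : set (T * T)) : Prop :=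
  exists U, prod_open opT opT U /\ (forall x, U (x, x)) /\ (forall p, U p -> W p).

Definition equicontinuous {G T : Type} (opT : set T -> Prop) (act : G -> T -> T) : Prop :=
  forall W, diag_nbhd opT W -> exists V, diag_nbhd opT V /\
    forall g x y, V (x, y) -> W (act g x, act g y).

Definition graph_closure {G T K : Type} (opT : set T -> Prop) (opK : set K -> Prop)
  (act : G -> T -> T) (th0 : T) (f : T -> K) : set (T * K) :=
  closure (prod_open opT opK) (fun p => exists g, p = (act g th0, f (act g th0))).

Definition homeomorphism {T : Type} (opT : set T -> Prop) (r : T -> T) : Prop :=
  exists r', (forall x, r' (r x) = x) /\ (forall x, r (r' x) = x) /\
    continuous opT opT r /\ continuous opT opT r'.

Definition rotation {G T : Type} (opT : set T -> Prop) (act : G -> T -> T) (r : T -> T) : Prop :=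
  homeomorphism opT r /\ forall g x, r (act g x) = act g (r x).

Definition invariant_under_no_rotation {G T K : Type} (opT : set T -> Prop)
  (opK : set K -> Prop) (act : G -> T -> T) (th0 : T) (f : T -> K) : Prop :=
  forall r, rotation opT act r ->
    (forall p, graph_closure opT opK act th0 f p <->
               graph_closure opT opK act th0 f (r (fst p), snd p)) ->
    forall x, r x = x.

Definition seq_of {G T K : Type} (act : G -> T -> T) (th0 : T) (f : T -> K) : G -> K :=
  fun g => f (act g th0).

Definition shift {G K : Type} (mul : G -> G -> G) (h : G) (x : G -> K) : G -> K :=
  fun g => x (mul g h).

Definition X_f {G T K : Type} (opK : set K -> Prop) (mul : G -> G -> G)
  (act : G -> T -> T) (th0 : T) (f : T -> K) : set (G -> K) :=
  closure (pow_open opK) (fun x => exists h, x = shift mul h (seq_of act th0 f)).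

Definition shift_img {G K : Type} (mul : G -> G -> G) (h : G) (A : set (G -> K)) : set (G -> K) :=
  fun x => exists y, A y /\ x = shift mul h y.

Definition independence_set {G K : Type} (mul : G -> G -> G) (inv : G -> G)
  (X : set (G -> K)) (A0 A1 : set (G -> K)) (J : set G) : Prop :=
  forall I : list G, (forall i, In i I -> J i) ->
    forall a : G -> bool, exists x, X x /\
      forall i, In i I -> shift_img mul (inv i) (if a i then A1 else A0) x.

Definition IN_pair {G K : Type} (opK : set K -> Prop) (mul : G -> G -> G) (inv : G -> G)
  (X : set (G -> K)) (x0 x1 : G -> K) : Prop :=
  forall N0 N1, nbhd (pow_open opK) x0 N0 -> nbhd (pow_open opK) x1 N1 ->
    forall n : nat, exists J : list G, NoDup J /\ n <= length J /\
      independence_set mul inv X (fun x => X x /\ N0 x) (fun x => X x /\ N1 x)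
        (fun g => In g J).

Definition non_null {G K : Type} (opK : set K -> Prop) (mul : G -> G -> G) (inv : G -> G)
  (X : set (G -> K)) : Prop :=
  exists x0 x1, X x0 /\ X x1 /\ x0 <> x1 /\ IN_pair opK mul inv X x0 x1.

From Stdlib Require Import List Arith Lia.
From Stdlib Require Import Classical ClassicalEpsilon FunctionalExtensionality PropExtensionality.
From mathcomp Require all_boot zify boolp classical_sets.
Import ListNotations.
Set Implicit Arguments.
Unset Strict Implicit.

(* The equivalence holds for every closed shift-invariant subset X of K^G
   with G a group and K compact Hausdorff (non_null_iff_separated_independence);
   mainTheorem9 is the instance X = X_f.
   - Forward: an IN-pair x0 <> x1 differs at a coordinate g0; compact
     neighbourhoods V0, V1 of x0 g0, x1 g0 inside disjoint open sets, together
     with independence sets J of the cylinders {x | x g0 near x_j g0}, give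
     the sequences g0 * J_i (separated_of_IN_pair).
   - Backward: the sets A_j = {x in X | x e in V_j} have arbitrarily large
     independence sets.  Large independence is "prime" in each argument
     (large_independence_split_left/right, resting on a Ramsey-theoretic
     splitting lemma, uniform_alternative); a Zorn/Tychonoff argument in K^G
     (cluster_point) then produces an IN-pair x0, x1 with x_j e in V_j, which
     are distinct since V0 and V1 are disjoint (non_null_of_separated). *)

Module Combinatorics.
Import all_boot zify.

Section Sequences.
Variable T : eqType.

Lemma pigeonhole (c m : nat) (f : T -> nat) (xs : seq T) :
  (forall y, y \in xs -> f y < c.+1) -> c.+1 * m <= size xs ->
  exists k, m <= count (fun y => f y == k) xs.
Proof.
elim: c xs => [|c IHc] xs f_lt size_xs.
  exists 0; rewrite (@eq_in_count _ _ predT) ?count_predT; first by rewrite mul1n in size_xs.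
  by move=> y /f_lt; rewrite ltnS leqn0.
have [many|few] := leqP m (count (fun y => f y == c.+1) xs); first by exists c.+1.
have [k Hk] : exists k, m <= count (fun y => f y == k) [seq y <- xs | f y != c.+1].
  apply: IHc => [y|].
    by rewrite mem_filter => /andP[ne /f_lt]; rewrite ltnS leq_eqVlt (negbTE ne).
  rewrite mulSn in size_xs; rewrite size_filter.
  have -> : count (fun y => f y != c.+1) xs = count (predC (fun y => f y == c.+1)) xs by [].
  have := count_predC (fun y => f y == c.+1) xs; lia.
by exists k; apply: leq_trans Hk _; rewrite count_filter; apply: sub_count => y /andP[].
Qed.

Definition homogeneous (s : nat) (chi : seq T -> nat) (H : seq T) : Prop :=
  forall Y1 Y2, subseq Y1 H -> subseq Y2 H -> size Y1 = s -> size Y2 = s ->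
  chi Y1 = chi Y2.

Definition ramsey_property (s c : nat) : Prop :=
  forall m, exists N, forall (H : seq T) (chi : seq T -> nat),
    N <= size H -> (forall Y, chi Y < c) ->
    exists H', [/\ subseq H' H, m <= size H' & homogeneous s chi H'].

Lemma ramsey_property0 (c : nat) : ramsey_property 0 c.
Proof.
move=> m; exists m => H chi size_H _; exists H; split=> //.
by move=> [|? ?] [|? ?].
Qed.

Lemma leader_subsequence (s c : nat) : ramsey_property s c -> forall k,
  exists M, forall (H : seq T) (chi : seq T -> nat),
    M <= size H -> (forall Y, chi Y < c) ->
    exists xs (lc : T -> nat), [/\ subseq xs H, k <= size xs, forall y, lc y < c &
      forall y Y, subseq (y :: Y) xs -> size Y = s -> chi (y :: Y) = lc y].
Proof.
move=> ramsey_s; elim=> [|k [Mk HMk]].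
  exists 0 => H chi _ chi_lt; exists [::], (fun _ => chi [::]).
  by split=> //; apply: sub0seq.
have [N HN] := ramsey_s Mk.
exists N.+1 => [[//|x H1]] chi /= size_H chi_lt.
have [S [sub_S size_S hom_S]] := HN H1 (fun Y => chi (x :: Y)) size_H (fun Y => chi_lt _).
have [xs [lc [sub_xs size_xs lc_lt lead]]] := HMk S chi size_S chi_lt.
exists (x :: xs), (fun y => if y == x then chi (x :: take s S) else lc y).
split=> [||y|y Y]; first by rewrite /= eqxx; apply: subseq_trans sub_xs sub_S.
- by [].
- by case: eqP.
have [-> /=|ne_yx] := eqVneq y x; last by rewrite /= (negbTE ne_yx); apply: lead.
rewrite eqxx => sub_Y size_Y.
have sub_YS : subseq Y S := subseq_trans sub_Y sub_xs.
have size_take : size (take s S) = s.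
  by rewrite size_take_min; apply/minn_idPl; rewrite -size_Y size_subseq.
exact: hom_S Y (take s S) sub_YS (take_subseq _ _) size_Y size_take.
Qed.

Lemma ramsey_propertyS (s c : nat) : ramsey_property s c -> ramsey_property s.+1 c.
Proof.
move=> ramsey_s m; have [M HM] := leader_subsequence ramsey_s (c * m).
exists M => H chi size_H chi_lt.
have [xs [lc [sub_xs size_xs lc_lt lead]]] := HM H chi size_H chi_lt.
case: c chi_lt lc_lt size_xs {HM ramsey_s} => [chi_lt|c _ lc_lt size_xs].
  by have := chi_lt [::].
have [k count_k] := pigeonhole (fun y _ => lc_lt y) size_xs.
exists [seq y <- xs | lc y == k]; split.
- exact: subseq_trans (filter_subseq _ _) sub_xs.
- by rewrite size_filter.
have colour_k Y : subseq Y [seq y <- xs | lc y == k] -> size Y = s.+1 -> chi Y = k.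
  case: Y => [//|y Y] sub_Y [size_Y].
  have sub_Yxs := subseq_trans sub_Y (filter_subseq _ xs).
  have : y \in [seq y <- xs | lc y == k] by apply: (mem_subseq sub_Y); rewrite inE eqxx.
  by rewrite mem_filter (lead _ _ sub_Yxs size_Y) => /andP[/eqP].
by move=> Y1 Y2 sub1 sub2 size1 size2; rewrite !colour_k.
Qed.

Theorem ramsey (s c : nat) : ramsey_property s c.
Proof. by elim: s => [|s]; [apply: ramsey_property0 | apply: ramsey_propertyS]. Qed.

(* Binary encoding of bit sequences, injective on sequences of equal length;
   it turns a bit pattern into a colour for Ramsey's theorem. *)
Fixpoint code (l : seq bool) : nat := if l is b :: l' then b + (code l').*2 else 0.

Lemma code_lt (l : seq bool) : code l < 2 ^ size l.
Proof. by elim: l => [|b l IH] //=; rewrite expnS; case: b; lia. Qed.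

Lemma code_inj (l1 l2 : seq bool) : size l1 = size l2 -> code l1 = code l2 -> l1 = l2.
Proof.
elim: l1 l2 => [|b1 l1 IH] [|b2 l2] //= [size_l] code_l.
have eq_b : b1 = b2.
  by move: (congr1 odd code_l); rewrite !oddD !odd_double !addbF; case: b1 b2 {code_l} => [] [].
by subst b2; congr (_ :: _); apply: IH => //; move: code_l; case: b1; lia.
Qed.

Lemma homogeneous_pattern (s q : nat) : exists N, forall (H : seq T) (pat : seq T -> seq bool),
  N <= size H -> (forall Y, size (pat Y) = size Y) ->
  exists H' F, [/\ subseq H' H, q <= size H', size F = s &
    forall Y, subseq Y H' -> size Y = s -> pat Y = F].
Proof.
have [N HN] := ramsey s (2 ^ s) (maxn s q).
exists N => H pat size_H size_pat.
pose chi Y := if size Y == s then code (pat Y) else 0.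
have chi_lt Y : chi Y < 2 ^ s.
  by rewrite /chi; case: eqP => [<-|_]; [rewrite -(size_pat Y) code_lt | rewrite expn_gt0].
have [H' [sub_H' size_H' hom]] := HN H chi size_H chi_lt.
move: size_H'; rewrite geq_max => /andP[le_s_H' le_q_H'].
have size_Y0 : size (take s H') = s by rewrite size_take_min; apply/minn_idPl.
exists H', (pat (take s H')); split=> //; first by rewrite size_pat.
move=> Y sub_Y size_Y; apply: code_inj; first by rewrite !size_pat size_Y.
have := hom Y (take s H') sub_Y (take_subseq _ _) size_Y size_Y0.
by rewrite /chi size_Y size_Y0 eqxx.
Qed.

Lemma pair_choice_subseq (x0 : T) (H : seq T) (c : nat -> bool) (s : nat) :
  s.*2 <= size H -> subseq [seq nth x0 H (r.*2 + c r) | r <- iota 0 s] H.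
Proof.
elim: s H c => [|s IHs] H c size_H; first exact: sub0seq.
case: H size_H => [|a [|b H]] // size_H.
rewrite -[iota 0 s.+1]/(0 :: iota 1 s) map_cons -cat1s -[a :: b :: H]/([:: a; b] ++ H).
apply: cat_subseq; first by rewrite sub1seq; case: (c 0); rewrite /= !inE eqxx ?orbT.
rewrite (iotaDl 1 0 s) -map_comp.
exact: (IHs H (fun r => c r.+1)).
Qed.

Lemma pair_choice_mem (x0 : T) (H : seq T) (c : nat -> bool) (s r : nat) :
  uniq H -> s.*2 <= size H -> r < s ->
  (nth x0 H r.*2 \in [seq nth x0 H (r'.*2 + c r') | r' <- iota 0 s]) = ~~ c r.
Proof.
move=> uniq_H size_H lt_rs; apply/mapP/idP => [[r']|c_r].
  rewrite mem_iota => /andP[_ lt_r's] /eqP; rewrite nth_uniq //; last by case: (c r'); lia.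
    case c_r': (c r') => /eqP /= eq_r; first lia.
    have -> : r = r' by lia.
    by rewrite c_r'.
  lia.
by exists r; rewrite ?mem_iota ?(negbTE c_r) ?addn0.
Qed.
End Sequences.

Lemma majority_positions (m : nat) (F : seq bool) : m + m <= size F ->
  exists (b : bool) (U : seq nat),
    [/\ size U = m, uniq U & forall r, r \in U -> r < size F /\ nth false F r = b].
Proof.
move=> size_F.
have [b count_b] : exists b, m <= count (pred1 b) F.
  have := count_predC (pred1 true) F.
  have -> : count (predC (pred1 true)) F = count (pred1 false) F by apply: eq_count => -[].
  move=> E; rewrite -E in size_F.
  by case: (leqP m (count (pred1 true) F)) => ?; [exists true | exists false; lia].
pose U := [seq r <- iota 0 (size F) | nth false F r == b].
have size_U : m <= size U.
  by rewrite size_filter; move: count_b; rewrite -{1}(mkseq_nth false F) /mkseq count_map.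
exists b, (take m U); split.
- by rewrite size_takel.
- by rewrite take_uniq // filter_uniq // iota_uniq.
by move=> r /mem_take; rewrite mem_filter mem_iota => /andP[/eqP].
Qed.

(* The splitting lemma behind the decomposition of independence.  Read
   col tau k as telling which of two alternatives serves position k under the
   0/1-pattern tau.  The proof applies Ramsey's
   theorem to the pattern seen by s-subsets Y under the pattern "0 exactly on
   Y", then chooses Y inside consecutive pairs of a homogeneous sequence. *)
Lemma uniform_alternative (m : nat) : exists N, forall n (col : (nat -> bool) -> nat -> bool),
  N <= n -> exists (L : seq nat) (x : bool),
  [/\ size L = m, uniq L, forall k, k \in L -> k < n &
    forall sg : nat -> bool, exists2 tau : nat -> bool,
      forall k, k \in L -> tau k = sg k &
      forall k, k \in L -> sg k = false -> col tau k = x].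
Proof.
pose s := m + m.
have [N HN] := homogeneous_pattern nat s s.*2.
exists N => n col le_Nn.
pose pat (Y : seq nat) := [seq col (fun i => i \notin Y) k | k <- Y].
have le_N_iota : N <= size (iota 0 n) by rewrite size_iota.
have [H [F [sub_H size_H size_F hom]]] := HN (iota 0 n) pat le_N_iota (fun Y => size_map _ _).
have uniq_H : uniq H := subseq_uniq sub_H (iota_uniq 0 n).
have [x [U [size_U uniq_U HU]]] : exists x U, [/\ size U = m, uniq U &
    forall r, r \in U -> r < s /\ nth false F r = x].
  by rewrite -size_F; apply: majority_positions; rewrite size_F.
have even_lt r : r \in U -> r.*2 < size H by move=> /HU[lt_rs _]; lia.
exists [seq nth 0 H r.*2 | r <- U], x; split.
- by rewrite size_map.
- rewrite map_inj_in_uniq // => r r' /even_lt lt_r /even_lt lt_r' /eqP.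
  by rewrite nth_uniq // => /eqP; lia.
- move=> _ /mapP[r /even_lt lt_r ->].
  by have := mem_subseq sub_H (mem_nth 0 lt_r); rewrite mem_iota.
move=> sg.
pose c r := ~~ ((r \in U) && ~~ sg (nth 0 H r.*2)).
pose Y := [seq nth 0 H (r.*2 + c r) | r <- iota 0 s].
have mem_Y r : r \in U -> (nth 0 H r.*2 \in Y) = ~~ c r.
  by move=> /HU[lt_rs _]; apply: pair_choice_mem.
exists (fun i => i \notin Y) => _ /mapP[r r_U ->] /=.
  by rewrite mem_Y // negbK /c r_U /= negbK.
move=> sg_r; have [lt_rs F_r] := HU r r_U.
have nth_Y : nth 0 Y r = nth 0 H r.*2.
  by rewrite (nth_map 0) ?size_iota // nth_iota // /c r_U sg_r addn0.
have pat_Y : pat Y = F.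
  by apply: hom; [apply: pair_choice_subseq | rewrite size_map size_iota].
by rewrite -F_r -pat_Y (nth_map 0) ?nth_Y // size_map size_iota.
Qed.

Lemma In_mem (T : eqType) (k : T) (L : seq T) : List.In k L <-> k \in L.
Proof.
elim: L => [|y L IH] //=; rewrite inE; split.
  by case=> [->|/IH ->]; rewrite ?eqxx ?orbT.
by case/orP => [/eqP ->|/IH]; [left | right].
Qed.

Lemma uniq_NoDup (T : eqType) (L : seq T) : uniq L -> List.NoDup L.
Proof.
elim: L => [|y L IH] /=; first by constructor.
by case/andP => y_L uniq_L; constructor; [move/In_mem; rewrite (negbTE y_L) | apply: IH].
Qed.

Lemma uniform_alternative_list (m : nat) : exists N, forall n (col : (nat -> bool) -> nat -> bool),
  (N <= n)%coq_nat -> exists (L : list nat) (x : bool),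
  length L = m /\ List.NoDup L /\ (forall k, List.In k L -> (k < n)%coq_nat) /\
  forall sg : nat -> bool, exists tau : nat -> bool,
    (forall k, List.In k L -> tau k = sg k) /\
    (forall k, List.In k L -> sg k = false -> col tau k = x).
Proof.
have [N HN] := uniform_alternative m; exists N => n col /leP le_Nn.
have [L [x [size_L uniq_L lt_L extend]]] := HN n col le_Nn.
exists L, x; split; first by rewrite -size_L.
split; first exact: uniq_NoDup.
split=> [k /In_mem /lt_L /ltP //|sg].
have [tau agree serve] := extend sg.
by exists tau; split=> k /In_mem; [apply: agree | apply: serve].
Qed.
End Combinatorics.

Module Zorn.
Import all_boot boolp classical_sets.
Local Open Scope classical_set_scope.

Lemma zorn_sets (T : Type) (P : (T -> Prop) -> Prop) :
  (forall F : (T -> Prop) -> Prop, (forall A, F A -> P A) ->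
    (forall A B, F A -> F B -> (forall x, A x -> B x) \/ (forall x, B x -> A x)) ->
    P (fun x => exists A, F A /\ A x)) ->
  exists A, P A /\ forall B, (forall x, A x -> B x) -> P B -> forall x, B x -> A x.
Proof.
move=> chain_closed.
have [|A [PA maxA]] := @Zorn_bigcup T P.
  move=> F FP Ftot; have -> : \bigcup_(X in F) X = (fun x => exists A, F A /\ A x).
    by apply/funext => x; apply/propext; split=> [[X FX Xx]|[X [FX Xx]]]; exists X.
  exact: chain_closed.
exists A; split=> // B AB PB x Bx; apply: contrapT => nAx.
by apply: (maxA B _ PB); split=> // BA; apply: nAx; apply: BA.
Qed.
End Zorn.

Section OpenSets.
Variables (T : Type) (op : set T -> Prop).

Lemma open_ext (U V : set T) : op U -> (forall z, U z <-> V z) -> op V.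
Proof.
  intros HU HUV. replace V with U; auto.
  apply functional_extensionality; intro z; apply propositional_extensionality; auto.
Qed.

Hypothesis top : is_topology op.

Lemma open_inter_list {A : Type} (l : list A) (S : A -> set T) :
  (forall a, In a l -> op (S a)) -> op (fun z => forall a, In a l -> S a z).
Proof.
  destruct top as [op_full [op_inter _]].
  induction l as [|a l IH]; intros HS.
  - apply (open_ext op_full). intro z; split; [intros _ a []|auto].
  - apply (open_ext (U := fun z => S a z /\ (forall b, In b l -> S b z))).
    + apply op_inter; [apply HS; left; auto|apply IH; intros b Hb; apply HS; right; auto].
    + intro z; split.
      * intros [Ha Hl] b [<-|Hb]; auto.
      * intros H; split; [apply H; left|intros b Hb; apply H; right]; auto.
Qed.

Lemma open_guard (Q : Prop) (U : set T) : (Q -> op U) -> op (fun z => Q -> U z).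
Proof.
  intros HU. destruct (classic Q) as [Hq|Hq].
  - apply (open_ext (HU Hq)). intro z; split; auto.
  - apply (open_ext (proj1 top)). intro z; split; [intros _ Hq'; contradiction|auto].
Qed.

Lemma open_inter_list_cond {A : Type} (l : list A) (Q : A -> Prop) (S : A -> set T) :
  (forall a, In a l -> op (S a)) -> op (fun z => forall a, In a l -> Q a -> S a z).
Proof.
  intros HS. apply (open_inter_list (S := fun a z => Q a -> S a z)).
  intros a Ha. apply open_guard; auto.
Qed.

Lemma open_union_list {A : Type} (l : list A) (S : A -> set T) :
  (forall a, In a l -> op (S a)) -> op (fun z => exists a, In a l /\ S a z).
Proof.
  intros HS.
  apply (open_ext (U := fun z => exists i : {a | In a l}, S (proj1_sig i) z)).
  - apply (proj2 (proj2 top)). intros [a Ha]; apply HS; auto.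
  - intro z; split.
    + intros [[a Ha] Hz]; exists a; auto.
    + intros [a [Ha Hz]]; exists (exist _ a Ha); auto.
Qed.

Lemma nbhd_open (U : set T) (x : T) : op U -> U x -> nbhd op x U.
Proof. intros; exists U; auto. Qed.

Lemma closure_closure (S : set T) (x : T) : closure op (closure op S) x -> closure op S x.
Proof.
  intros Hx U HU Ux. destruct (Hx U HU Ux) as [y [Uy Sy]]. exact (Sy U HU Uy).
Qed.
End OpenSets.

Section CompactHausdorff.
Variables (K : Type) (opK : set K -> Prop).
Hypothesis topK : is_topology opK.

Lemma closed_compact (Q : set K) : compact opK -> opK Q -> compact_set opK (fun k => ~ Q k).
Proof.
  intros compK HQ I F HF Hcov.
  destruct (compK (option I) (fun o => match o with None => Q | Some i => F i end)) as [l Hl].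
  - intros [i|]; auto.
  - intros x _. destruct (classic (Q x)) as [Hq|Hq].
    + exists None; auto.
    + destruct (Hcov x Hq) as [i Hi]; exists (Some i); auto.
  - exists (flat_map (fun o => match o with None => [] | Some i => [i] end) l).
    intros x Hx. destruct (Hl x Logic.I) as [[i|] [Hin Hi]]; [|contradiction].
    exists i; split; auto. apply in_flat_map. exists (Some i); simpl; auto.
Qed.

Hypothesis hausK : hausdorff opK.

Lemma separation (C : set K) (k : K) : compact_set opK C -> ~ C k ->
  exists O Q, opK O /\ opK Q /\ O k /\ (forall z, C z -> Q z) /\ (forall z, O z -> Q z -> False).
Proof.
  intros compC Hk.
  set (I := {p : set K * set K | opK (fst p) /\ opK (snd p) /\ fst p k /\
                                 (forall z, fst p z -> snd p z -> False)}).
  destruct (compC I (fun i => snd (proj1_sig i))) as [l Hl].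
  - intro i; apply (proj2_sig i).
  - intros z Hz. assert (Hne : k <> z) by (intro E; apply Hk; rewrite E; exact Hz).
    destruct (hausK Hne) as [U [V [HU [HV [Uk [Vz Hd]]]]]].
    exists (exist _ (U, V) (conj HU (conj HV (conj Uk Hd)))); simpl; auto.
  - exists (fun z => forall i, In i l -> fst (proj1_sig i) z).
    exists (fun z => exists i, In i l /\ snd (proj1_sig i) z).
    split; [apply open_inter_list; auto; intros i _; apply (proj2_sig i)|].
    split; [apply open_union_list; auto; intros i _; apply (proj2_sig i)|].
    split; [intros i _; apply (proj2_sig i)|].
    split; [intros z Hz; apply Hl; auto|].
    intros z H1 [i [Hi H2]]. apply (proj2 (proj2 (proj2 (proj2_sig i))) z); auto.
Qed.

Lemma compact_closed (C : set K) : compact_set opK C -> opK (fun k => ~ C k).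
Proof.
  intros compC.
  apply (open_ext (U := fun x => exists i : {O : set K | opK O /\ forall z, O z -> ~ C z},
                                  proj1_sig i x)).
  - apply (proj2 (proj2 topK)). intro i; apply (proj2_sig i).
  - intro z; split.
    + intros [i Hz]; apply (proj2_sig i); auto.
    + intro Hz. destruct (separation compC Hz) as [O [Q [HO [HQ [Oz [CQ Hd]]]]]].
      assert (HOC : forall y, O y -> ~ C y) by (intros y Oy Cy; apply (Hd y); auto).
      exists (exist _ O (conj HO HOC)); simpl; auto.
Qed.

Lemma compact_neighbourhood (U : set K) (k : K) : compact opK -> opK U -> U k ->
  exists O V, opK O /\ compact_set opK V /\ O k /\ (forall z, O z -> V z) /\ (forall z, V z -> U z).
Proof.
  intros compK HU Uk.
  destruct (separation (C := fun z => ~ U z) (k := k)) as [O [Q [HO [HQ [Ok [UQ Hd]]]]]].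
  - apply closed_compact; auto.
  - intro H; apply H; auto.
  - exists O, (fun z => ~ Q z). repeat split; auto.
    + apply closed_compact; auto.
    + intros z Qz. apply NNPP; intro Uz; apply Qz, UQ; auto.
Qed.
End CompactHausdorff.

Section ProductTopology.
Variables (I K : Type) (opK : set K -> Prop).

Lemma pow_open_full : pow_open (I := I) opK (fun _ => True).
Proof. intros x _. exists [], (fun _ _ => True). split; [intros i []|auto]. Qed.

Lemma pow_open_cylinder (g : I) (O : set K) : opK O -> pow_open opK (fun x : I -> K => O (x g)).
Proof.
  intros HO x Ox. exists [g], (fun _ => O). split.
  - intros i [<-|[]]; auto.
  - intros y Hy. apply (Hy g); left; auto.
Qed.

Hypothesis topK : is_topology opK.

Lemma pow_open_inter (U V : set (I -> K)) :
  pow_open opK U -> pow_open opK V -> pow_open opK (fun x => U x /\ V x).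
Proof.
  intros HU HV x [Ux Vx].
  destruct (HU x Ux) as [l1 [V1 [H1 H1']]]. destruct (HV x Vx) as [l2 [V2 [H2 H2']]].
  exists (l1 ++ l2), (fun i k => (In i l1 -> V1 i k) /\ (In i l2 -> V2 i k)). split.
  - intros i Hi. split; [|split; intro; [apply H1|apply H2]; auto].
    apply (proj1 (proj2 topK)); apply (open_guard topK); intro; [apply H1|apply H2]; auto.
  - intros y Hy. split; [apply H1'|apply H2']; intros i Hi;
      destruct (Hy i) as [Hy1 Hy2]; auto using in_or_app.
Qed.

Lemma nbhd_inter (x : I -> K) (N0 N1 : set (I -> K)) :
  nbhd (pow_open opK) x N0 -> nbhd (pow_open opK) x N1 ->
  nbhd (pow_open opK) x (fun y => N0 y /\ N1 y).
Proof.
  intros [U0 [HU0 [U0x U0N]]] [U1 [HU1 [U1x U1N]]].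
  exists (fun y => U0 y /\ U1 y). split; [apply pow_open_inter; auto|split; auto].
  intros y [U0y U1y]; auto.
Qed.
End ProductTopology.

Section Shifts.
Variables (G K : Type) (mul : G -> G -> G) (inv : G -> G) (e : G).
Hypothesis group : is_group mul inv e.

Lemma shift_shift (h h' : G) (y : G -> K) :
  shift mul h (shift mul h' y) = shift mul (mul h h') y.
Proof.
  destruct group as [assoc _]. unfold shift.
  apply functional_extensionality; intro g. rewrite assoc; auto.
Qed.

Lemma shift_unit (y : G -> K) : shift mul e y = y.
Proof.
  destruct group as [_ [_ [unit_r _]]]. unfold shift.
  apply functional_extensionality; intro g. rewrite unit_r; auto.
Qed.

Lemma shift_img_inv (i : G) (A : set (G -> K)) (x : G -> K) :
  shift_img mul (inv i) A x <-> A (shift mul i x).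
Proof.
  destruct group as [_ [_ [_ [inv_l inv_r]]]]. split.
  - intros [y [Ay ->]]. rewrite shift_shift, inv_r, shift_unit; auto.
  - intros HA. exists (shift mul i x). split; auto.
    rewrite shift_shift, inv_l, shift_unit; auto.
Qed.

Lemma pow_open_shift (opK : set K -> Prop) (h : G) (U : set (G -> K)) :
  pow_open opK U -> pow_open opK (fun z => U (shift mul h z)).
Proof.
  intros HU z Hz. destruct (HU _ Hz) as [l [V [HV HVU]]].
  assert (Hcancel : forall i, mul (mul i h) (inv h) = i).
  { intro i. destruct group as [assoc [_ [unit_r [_ inv_r]]]]. rewrite <- assoc, inv_r; auto. }
  exists (map (fun i => mul i h) l), (fun j => V (mul j (inv h))). split.
  - intros j Hj. apply in_map_iff in Hj. destruct Hj as [i [<- Hi]]. rewrite Hcancel; auto.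
  - intros y Hy. apply HVU. intros i Hi. unfold shift.
    specialize (Hy (mul i h) (in_map (fun i => mul i h) l i Hi)). rewrite Hcancel in Hy; auto.
Qed.

Lemma closure_shift_invariant (opK : set K -> Prop) (S : set (G -> K)) :
  (forall h x, S x -> S (shift mul h x)) ->
  forall h x, closure (pow_open opK) S x -> closure (pow_open opK) S (shift mul h x).
Proof.
  intros HS h x Hx U HU Ux.
  destruct (Hx (fun z => U (shift mul h z)) (pow_open_shift (h := h) HU) Ux) as [y [Uy Sy]].
  exists (shift mul h y); auto.
Qed.
End Shifts.

Section Independence.
Variables (G K : Type) (mul : G -> G -> G) (X : set (G -> K)).

(* This is independence_set, phrased through sigma^i x instead of the
   translates sigma^(i^-1) B, sigma^(i^-1) C (see independence_set_iff). *)
Definition independent_list (B C : set (G -> K)) (J : list G) : Prop :=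
  forall a : G -> bool, exists x, X x /\
    forall i, In i J -> (if a i then C else B) (shift mul i x).

Definition large_independence (B C : set (G -> K)) : Prop :=
  forall n, exists J, NoDup J /\ n <= length J /\ independent_list B C J.

Lemma independent_list_mono (B B' C C' : set (G -> K)) (J : list G) :
  (forall y, B y -> B' y) -> (forall y, C y -> C' y) ->
  independent_list B C J -> independent_list B' C' J.
Proof.
  intros HB HC Hind a. destruct (Hind a) as [x [Xx Hx]]. exists x; split; auto.
  intros i Hi. specialize (Hx i Hi). destruct (a i); auto.
Qed.

Lemma large_independence_mono (B B' C C' : set (G -> K)) :
  (forall y, B y -> B' y) -> (forall y, C y -> C' y) ->
  large_independence B C -> large_independence B' C'.
Proof.
  intros HB HC H n. destruct (H n) as [J [HJ [HnJ Hind]]].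
  exists J; repeat split; auto. apply (independent_list_mono HB HC Hind).
Qed.

Lemma large_independence_swap (B C : set (G -> K)) :
  large_independence B C -> large_independence C B.
Proof.
  intros H n. destruct (H n) as [J [HJ [HnJ Hind]]]. exists J; repeat split; auto.
  intro a. destruct (Hind (fun g => negb (a g))) as [x [Xx Hx]]. exists x; split; auto.
  intros i Hi. specialize (Hx i Hi). destruct (a i); auto.
Qed.

Lemma large_independence_nonempty (B C : set (G -> K)) :
  large_independence B C -> exists x, B x.
Proof.
  intros H. destruct (H 1) as [[|i J] [_ [H1 Hind]]]; [simpl in H1; lia|].
  destruct (Hind (fun _ => false)) as [x [_ Hx]]. exists (shift mul i x). apply Hx; left; auto.
Qed.

Lemma list_pattern (A : Type) (J : list A) (d : A) (tau : nat -> bool) : NoDup J ->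
  exists a : A -> bool, forall k, k < length J -> a (nth k J d) = tau k.
Proof.
  intros HJ.
  exists (fun g => if excluded_middle_informative
                    (exists k, k < length J /\ nth k J d = g /\ tau k = true) then true else false).
  intros k Hk. destruct excluded_middle_informative as [[k' [Hk' [E Ht]]]|Hn].
  - rewrite <- Ht. f_equal. apply (proj1 (NoDup_nth J d) HJ); auto.
  - destruct (tau k) eqn:Et; auto. exfalso; apply Hn; exists k; auto.
Qed.

Lemma independent_positions (B C : set (G -> K)) (J : list G) (d : G) :
  NoDup J -> independent_list B C J ->
  forall tau : nat -> bool, exists x, X x /\
    forall k, k < length J -> (if tau k then C else B) (shift mul (nth k J d) x).
Proof.
  intros HJ Hind tau. destruct (list_pattern d tau HJ) as [a Ha].
  destruct (Hind a) as [x [Xx Hx]]. exists x; split; auto.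
  intros k Hk. rewrite <- Ha by auto. apply Hx, nth_In; auto.
Qed.

Lemma independent_of_positions (B C : set (G -> K)) (J : list G) (d : G) (L : list nat) :
  (forall sg : nat -> bool, exists x, X x /\
     forall k, In k L -> (if sg k then C else B) (shift mul (nth k J d) x)) ->
  independent_list B C (map (fun k => nth k J d) L).
Proof.
  intros Hpos a. destruct (Hpos (fun k => a (nth k J d))) as [x [Xx Hx]].
  exists x; split; auto. intros i Hi. apply in_map_iff in Hi. destruct Hi as [k [<- Hk]].
  apply Hx; auto.
Qed.

(* The witnesses wit tau for all patterns tau on
   the positions of J colour each position by the alternative serving it, and
   uniform_alternative extracts m positions served uniformly. *)
Lemma independent_list_split (B B' C : set (G -> K)) (d : G) (m : nat) :
  exists N, forall J, NoDup J -> N <= length J ->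
    independent_list (fun x => B x \/ B' x) C J ->
    exists J', NoDup J' /\ length J' = m /\
      (independent_list B C J' \/ independent_list B' C J').
Proof.
  destruct (Combinatorics.uniform_alternative_list m) as [N HN]. exists N.
  intros J HJ HNJ Hind.
  destruct (choice _ (independent_positions d HJ Hind)) as [wit Hwit].
  set (col := fun tau k =>
    if excluded_middle_informative (B (shift mul (nth k J d) (wit tau))) then false else true).
  destruct (HN (length J) col HNJ) as [L [x [HL [HLnd [HLlt Hext]]]]].
  assert (Hserved : forall sg : nat -> bool, exists y, X y /\ forall k, In k L ->
            (if sg k then C else if x then B' else B) (shift mul (nth k J d) y)).
  { intro sg. destruct (Hext sg) as [tau [Hagree Hcol]]. exists (wit tau).
    destruct (Hwit tau) as [Xw Hw]. split; auto. intros k Hk.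
    specialize (Hw k (HLlt k Hk)). rewrite Hagree in Hw by auto.
    destruct (sg k) eqn:Esg; auto.
    specialize (Hcol k Hk Esg). unfold col in Hcol.
    destruct excluded_middle_informative as [HB|HB]; subst x; auto.
    destruct Hw as [Hw|Hw]; [contradiction|auto]. }
  exists (map (fun k => nth k J d) L). split; [|split].
  - apply NoDup_map_NoDup_ForallPairs; auto.
    intros k k' Hk Hk'. apply (proj1 (NoDup_nth J d) HJ); auto.
  - rewrite length_map; auto.
  - destruct x; [right|left]; apply independent_of_positions; auto.
Qed.

Lemma large_independence_split_left (B B' C : set (G -> K)) (d : G) :
  large_independence (fun x => B x \/ B' x) C ->
  large_independence B C \/ large_independence B' C.
Proof.
  intros H. apply NNPP. intro Hn. apply not_or_and in Hn. destruct Hn as [H1 H2].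
  apply not_all_ex_not in H1. destruct H1 as [n1 H1].
  apply not_all_ex_not in H2. destruct H2 as [n2 H2].
  destruct (independent_list_split B B' C d (n1 + n2)) as [N HN].
  destruct (H N) as [J [HJ [HNJ Hind]]].
  destruct (HN J HJ HNJ Hind) as [J' [HJ' [Hlen [Hi|Hi]]]];
    [apply H1|apply H2]; exists J'; repeat split; auto; lia.
Qed.

Lemma large_independence_split_right (B C C' : set (G -> K)) (d : G) :
  large_independence B (fun x => C x \/ C' x) ->
  large_independence B C \/ large_independence B C'.
Proof.
  intros H. apply large_independence_swap in H.
  destruct (large_independence_split_left d H); [left|right]; apply large_independence_swap; auto.
Qed.
End Independence.

Section Cluster.
Variables (G K : Type) (opK : set K -> Prop) (P : set (G -> K) -> Prop).
Hypothesis topK : is_topology opK.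
Hypothesis compK : compact opK.
Hypothesis P_mono : forall A B : set (G -> K), (forall x, A x -> B x) -> P A -> P B.
Hypothesis P_prime : forall A B : set (G -> K), P (fun x => A x \/ B x) -> P A \/ P B.
Hypothesis P_full : P (fun _ => True).
Hypothesis P_nonempty : forall A, P A -> exists x, A x.

(* A constraint ((g, k), O) restricts coordinate g to the open set O around k. *)
Definition cylinder (l : list (G * K * set K)) : set (G -> K) :=
  fun x => forall t, In t l -> snd t (x (fst (fst t))).

Definition anchored (A : set (G * K)) (l : list (G * K * set K)) : Prop :=
  forall t, In t l -> A (fst t) /\ opK (snd t) /\ snd t (snd (fst t)).

Definition consistent (A : set (G * K)) : Prop :=
  forall l, anchored A l -> P (cylinder l).

Lemma prime_finite_union (I : Type) (S : I -> set (G -> K)) (l : list I) :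
  P (fun x => exists i, In i l /\ S i x) -> exists i, In i l /\ P (S i).
Proof.
  induction l as [|a l IH]; intros H.
  - destruct (P_nonempty H) as [x [i [[] _]]].
  - assert (Hsplit : P (fun x => S a x \/ (exists i, In i l /\ S i x))).
    { apply (P_mono (A := fun x => exists i, In i (a :: l) /\ S i x)); auto.
      intros x [i [[<-|Hi] Hs]]; [left|right; exists i]; auto. }
    destruct (P_prime Hsplit) as [Ha|Hl].
    + exists a; simpl; auto.
    + destruct (IH Hl) as [i [Hi Hs]]. exists i; simpl; auto.
Qed.

(* Zorn's hypothesis: the union of a chain of consistent sets is consistent,
   since a finite cylinder is anchored in a single member of the chain. *)
Lemma consistent_chain_union (F : set (set (G * K))) :
  (forall A, F A -> consistent A) ->
  (forall A B, F A -> F B -> (forall x, A x -> B x) \/ (forall x, B x -> A x)) ->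
  consistent (fun p => exists A, F A /\ A p).
Proof.
  intros HF Hchain l Hl.
  assert (Hone : forall l' : list (G * K * set K),
            (forall t, In t l' -> exists A, F A /\ A (fst t)) ->
            l' = [] \/ exists A, F A /\ forall t, In t l' -> A (fst t)).
  { induction l' as [|t l' IH]; intros H; [left; auto|right].
    destruct (H t (or_introl eq_refl)) as [A1 [FA1 A1t]].
    destruct (IH (fun t' Ht' => H t' (or_intror Ht'))) as [->|[A2 [FA2 HA2]]].
    - exists A1; split; auto. intros t' [<-|[]]; auto.
    - destruct (Hchain A1 A2 FA1 FA2) as [S12|S21].
      + exists A2; split; auto. intros t' [<-|Ht']; auto.
      + exists A1; split; auto. intros t' [<-|Ht']; auto. }
  destruct (Hone l) as [->|[A [FA HA]]].
  - intros t Ht; apply (Hl t Ht).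
  - apply (P_mono (A := fun _ => True)); auto. intros x _ t [].
  - apply (HF A FA). intros t Ht. destruct (Hl t Ht) as [_ H2]; split; auto.
Qed.

(* The compactness step: a consistent set can be extended consistently at any
   coordinate g.  Otherwise every k has a bad cylinder around (g, k); finitely
   many of their g-constraints cover K, and the consistent constraints of the
   chosen bad cylinders would force P onto one of them. *)
Lemma consistent_extend (A : set (G * K)) (g : G) :
  consistent A -> exists k, consistent (fun p => A p \/ p = (g, k)).
Proof.
  intros HA. apply NNPP. intro Hno.
  assert (Hbad : forall k, exists l, anchored (fun p => A p \/ p = (g, k)) l /\ ~ P (cylinder l)).
  { intro k. apply NNPP; intro H. apply Hno. exists k. intros l Hl.
    apply NNPP; intro HP. apply H. exists l; auto. }
  destruct (choice _ Hbad) as [bad Hbad'].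
  set (around := fun k z => forall t, In t (bad k) -> fst t = (g, k) -> snd t z).
  destruct (@compK K around) as [ks Hks].
  - intro k. apply open_inter_list_cond; auto. intros t Ht. apply (proj1 (Hbad' k) t Ht).
  - intros k _. exists k. intros t Ht Et.
    destruct (proj1 (Hbad' k) t Ht) as [_ [_ Hk]]. rewrite Et in Hk. exact Hk.
  - set (onA := fun l : list (G * K * set K) =>
      filter (fun t => if excluded_middle_informative (A (fst t)) then true else false) l).
    set (Lbig := flat_map (fun k => onA (bad k)) ks).
    assert (HL : P (cylinder Lbig)).
    { apply HA. intros t Ht. apply in_flat_map in Ht. destruct Ht as [k [_ Ht]].
      apply filter_In in Ht. destruct Ht as [Ht Ha].
      destruct excluded_middle_informative as [Ha'|]; [|discriminate].
      destruct (proj1 (Hbad' k) t Ht) as [_ [H2 H3]]; auto. }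
    assert (Hcov : P (fun x => exists k, In k ks /\ cylinder (bad k) x)).
    { apply (P_mono (A := cylinder Lbig)); auto. intros x Hx.
      destruct (Hks (x g) Logic.I) as [k [Hk Hxk]]. exists k; split; auto. intros t Ht.
      destruct (classic (A (fst t))) as [Ha|Ha].
      - apply Hx. apply in_flat_map. exists k; split; auto.
        apply filter_In. split; auto. destruct excluded_middle_informative; auto.
      - destruct (proj1 (Hbad' k) t Ht) as [[Ha'|Et] _]; [contradiction|].
        rewrite Et; apply Hxk; auto. }
    destruct (prime_finite_union Hcov) as [k [_ Hk]]. apply (proj2 (Hbad' k)); auto.
Qed.

(* A point all of whose neighbourhoods satisfy P: the coordinates of a
   maximal consistent set (Zorn), which is defined everywhere by
   consistent_extend.  This is Tychonoff's theorem in the form needed here. *)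
Lemma cluster_point : exists x, forall N, nbhd (pow_open opK) x N -> P N.
Proof.
  destruct (Zorn.zorn_sets (P := consistent)) as [A0 [HA0 Hmax]].
  { intros F HF Hchain. apply consistent_chain_union; auto. }
  assert (Htotal : forall g, exists k, A0 (g, k)).
  { intro g. destruct (consistent_extend g HA0) as [k Hk]. exists k.
    apply (Hmax _ (fun p Hp => or_introl Hp) Hk). right; auto. }
  destruct (choice _ Htotal) as [x Hx]. exists x.
  intros N [U [HU [Ux UN]]]. destruct (HU x Ux) as [l [V [HV HVU]]].
  apply (P_mono (A := cylinder (map (fun i => (i, x i, V i)) l))).
  - intros y Hy. apply UN, HVU. intros i Hi.
    apply (Hy (i, x i, V i)), (in_map (fun i => (i, x i, V i))); auto.
  - apply HA0. intros t Ht. apply in_map_iff in Ht. destruct Ht as [i [<- Hi]].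
    destruct (HV i Hi); simpl; auto.
Qed.
End Cluster.

Section INPairs.
Variables (G K : Type) (opK : set K -> Prop) (mul : G -> G -> G) (inv : G -> G) (e : G).
Hypothesis group : is_group mul inv e.
Hypothesis topK : is_topology opK.
Hypothesis compK : compact opK.
Variable X : set (G -> K).

Lemma independence_set_iff (B C : set (G -> K)) (J : list G) :
  independence_set mul inv X B C (fun g => In g J) <-> independent_list mul X B C J.
Proof.
  split.
  - intros Hind a. destruct (Hind J (fun i Hi => Hi) a) as [x [Xx Hx]]. exists x; split; auto.
    intros i Hi. apply (shift_img_inv group), Hx; auto.
  - intros Hind I HI a. destruct (Hind a) as [x [Xx Hx]]. exists x; split; auto.
    intros i Hi. apply (shift_img_inv group), Hx, HI; auto.
Qed.

(* Primeness in the second set, uniformly over the neighbourhoods of x0 in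
   the first set: two failing neighbourhoods are intersected. *)
Lemma large_independence_local_prime (x0 : G -> K) (A0 A1 N N' : set (G -> K)) :
  (forall N0, nbhd (pow_open opK) x0 N0 ->
     large_independence mul X (fun x => N0 x /\ A0 x) (fun x => (N x \/ N' x) /\ A1 x)) ->
  (forall N0, nbhd (pow_open opK) x0 N0 ->
     large_independence mul X (fun x => N0 x /\ A0 x) (fun x => N x /\ A1 x)) \/
  (forall N0, nbhd (pow_open opK) x0 N0 ->
     large_independence mul X (fun x => N0 x /\ A0 x) (fun x => N' x /\ A1 x)).
Proof.
  intros HN. apply NNPP; intro Hn. apply not_or_and in Hn. destruct Hn as [HnN HnN'].
  apply not_all_ex_not in HnN. destruct HnN as [Na HnN]. apply imply_to_and in HnN.
  apply not_all_ex_not in HnN'. destruct HnN' as [Nb HnN']. apply imply_to_and in HnN'.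
  destruct HnN as [nbNa HnN], HnN' as [nbNb HnN'].
  assert (Hsplit : large_independence mul X (fun x => (Na x /\ Nb x) /\ A0 x)
                     (fun x => (N x /\ A1 x) \/ (N' x /\ A1 x))).
  { apply (large_independence_mono (B := fun x => (Na x /\ Nb x) /\ A0 x)
                                   (C := fun x => (N x \/ N' x) /\ A1 x)); auto.
    - intros y [[Ny|Ny] Ay]; auto.
    - apply HN, nbhd_inter; auto. }
  destruct (large_independence_split_right e Hsplit) as [Hq|Hq].
  - apply HnN. apply (large_independence_mono (B := fun x => (Na x /\ Nb x) /\ A0 x)
                                               (C := fun x => N x /\ A1 x)); auto.
    intros y [[Nay _] Ay]; auto.
  - apply HnN'. apply (large_independence_mono (B := fun x => (Na x /\ Nb x) /\ A0 x)
                                                (C := fun x => N' x /\ A1 x)); auto.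
    intros y [[_ Nby] Ay]; auto.
Qed.

(* Both points come from cluster_point, the primeness
   being supplied by the splitting lemmas. *)
Lemma IN_pair_of_large_independence (A0 A1 : set (G -> K)) :
  large_independence mul X A0 A1 ->
  exists x0 x1,
    (forall N, nbhd (pow_open opK) x0 N -> exists y, N y /\ A0 y) /\
    (forall N, nbhd (pow_open opK) x1 N -> exists y, N y /\ A1 y) /\
    (forall N0 N1, nbhd (pow_open opK) x0 N0 -> nbhd (pow_open opK) x1 N1 ->
       large_independence mul X (fun x => N0 x /\ A0 x) (fun x => N1 x /\ A1 x)).
Proof.
  intros Hlarge.
  destruct (cluster_point
    (P := fun N => large_independence mul X (fun x => N x /\ A0 x) A1) topK compK)
    as [x0 H0].
  { intros N N' HNN' HN.
    apply (large_independence_mono (B := fun x => N x /\ A0 x) (C := A1)); auto.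
    intros y [Ny Ay]; auto. }
  { intros N N' HN. apply (large_independence_split_left e).
    apply (large_independence_mono (B := fun x => (N x \/ N' x) /\ A0 x) (C := A1)); auto.
    intros y [[Ny|Ny] Ay]; auto. }
  { apply (large_independence_mono (B := A0) (C := A1)); auto. }
  { intros N HN. destruct (large_independence_nonempty HN) as [y [Ny _]]. exists y; auto. }
  assert (full_x0 : nbhd (pow_open opK) x0 (fun _ => True))
    by (apply nbhd_open; auto; apply pow_open_full).
  destruct (cluster_point (P := fun N => forall N0, nbhd (pow_open opK) x0 N0 ->
      large_independence mul X (fun x => N0 x /\ A0 x) (fun x => N x /\ A1 x)) topK compK)
    as [x1 H1].
  { intros N N' HNN' HN N0 HN0.
    apply (large_independence_mono (B := fun x => N0 x /\ A0 x) (C := fun x => N x /\ A1 x)); auto.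
    intros y [Ny Ay]; auto. }
  { intros N N' HN. apply large_independence_local_prime; auto. }
  { intros N0 HN0. apply (large_independence_mono (B := fun x => N0 x /\ A0 x) (C := A1)); auto. }
  { intros N HN. specialize (HN _ full_x0). apply large_independence_swap in HN.
    destruct (large_independence_nonempty HN) as [y [Ny _]]. exists y; auto. }
  exists x0, x1. split; [|split].
  - intros N HN. destruct (large_independence_nonempty (H0 N HN)) as [y [Ny Ay]]. eauto.
  - intros N HN. specialize (H1 N HN _ full_x0). apply large_independence_swap in H1.
    destruct (large_independence_nonempty H1) as [y [Ny Ay]]. eauto.
  - intros N0 N1 HN0 HN1. apply H1; auto.
Qed.

Definition separated_independence : Prop :=
  exists V0 V1 : set K,
    compact_set opK V0 /\ compact_set opK V1 /\ (forall k, V0 k -> V1 k -> False) /\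
    forall l : nat, exists g : nat -> G,
      forall a : nat -> bool, exists x, X x /\
        forall i, i < l -> (if a i then V1 else V0) (x (g i)).

Hypothesis hausK : hausdorff opK.

(* A nontrivial IN-pair (x0, x1) differs at some coordinate g0.  Compact
   neighbourhoods V0, V1 of x0 g0 and x1 g0 inside disjoint open sets give the
   separating sets, and independence sets J of the cylinder neighbourhoods
   {x | x g0 in V_j} yield the sequence g0 * J_i. *)
Lemma separated_of_IN_pair (x0 x1 : G -> K) :
  x0 <> x1 -> IN_pair opK mul inv X x0 x1 -> separated_independence.
Proof.
  intros Hne HIN.
  assert (Hg0 : exists g0, x0 g0 <> x1 g0).
  { apply not_all_ex_not; intro H. apply Hne, functional_extensionality; exact H. }
  destruct Hg0 as [g0 Hg0].
  destruct (hausK Hg0) as [U0 [U1 [HU0 [HU1 [U0x [U1x disj]]]]]].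
  destruct (compact_neighbourhood topK hausK compK HU0 U0x)
    as [O0 [V0 [HO0 [HV0 [O0x [O0V0 V0U0]]]]]].
  destruct (compact_neighbourhood topK hausK compK HU1 U1x)
    as [O1 [V1 [HO1 [HV1 [O1x [O1V1 V1U1]]]]]].
  exists V0, V1. split; [|split; [|split]]; auto.
  { intros k H0 H1. apply (disj k); auto. }
  intro l.
  destruct (HIN (fun x => O0 (x g0)) (fun x => O1 (x g0))
                (nbhd_open (pow_open_cylinder (g := g0) HO0) O0x)
                (nbhd_open (pow_open_cylinder (g := g0) HO1) O1x) l) as [J [HJ [HlJ Hind]]].
  apply independence_set_iff in Hind.
  exists (fun i => mul g0 (nth i J e)). intro a.
  destruct (list_pattern e a HJ) as [a' Ha'].
  destruct (Hind a') as [x [Xx Hx]]. exists x. split; auto. intros i Hi.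
  assert (HiJ : In (nth i J e) J) by (apply nth_In; lia).
  specialize (Hx _ HiJ). rewrite Ha' in Hx by lia.
  destruct (a i); destruct Hx as [_ Ox]; auto.
Qed.

Hypothesis X_closed : forall x, closure (pow_open opK) X x -> X x.
Hypothesis X_invariant : forall h x, X x -> X (shift mul h x).

(* Translating along g i, the sets {x in X | x e in V_j} have arbitrarily
   large independence sets; the entries g i are distinct because V0 and V1
   are disjoint. *)
Lemma large_independence_of_separated (V0 V1 : set K) :
  (forall k, V0 k -> V1 k -> False) ->
  (forall l : nat, exists g : nat -> G, forall a : nat -> bool, exists x, X x /\
     forall i, i < l -> (if a i then V1 else V0) (x (g i))) ->
  large_independence mul X (fun x => X x /\ V0 (x e)) (fun x => X x /\ V1 (x e)).
Proof.
  intros disj Hl n. destruct (Hl n) as [g Hg].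
  destruct group as [_ [unit_l _]].
  exists (map g (seq 0 n)). split; [|split].
  - apply NoDup_map_NoDup_ForallPairs; [|apply seq_NoDup].
    intros i j Hi Hj E. apply in_seq in Hi; apply in_seq in Hj.
    apply NNPP; intro Hij.
    destruct (Hg (fun k => Nat.eqb k i)) as [x [_ Hx]].
    pose proof (Hx i ltac:(lia)) as Hxi. pose proof (Hx j ltac:(lia)) as Hxj.
    rewrite Nat.eqb_refl in Hxi. rewrite (proj2 (Nat.eqb_neq j i) (not_eq_sym Hij)) in Hxj.
    rewrite E in Hxi. apply (disj _ Hxj Hxi).
  - rewrite length_map, length_seq; auto.
  - intro a. destruct (Hg (fun k => a (g k))) as [x [Xx Hx]].
    exists x; split; auto. intros i Hi. apply in_map_iff in Hi. destruct Hi as [k [<- Hk]].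
    apply in_seq in Hk. specialize (Hx k ltac:(lia)).
    assert (Hshift : shift mul (g k) x e = x (g k)) by (unfold shift; rewrite unit_l; auto).
    destruct (a (g k)); split; auto; rewrite Hshift; auto.
Qed.

(* The converse: x0, x1 from IN_pair_of_large_independence lie in the closed
   set X, and x0 e in V0, x1 e in V1 since V0, V1 are closed; hence they are
   distinct and form an IN-pair. *)
Lemma non_null_of_separated : separated_independence -> non_null opK mul inv X.
Proof.
  intros [V0 [V1 [HV0 [HV1 [disj Hl]]]]].
  destruct (IN_pair_of_large_independence (large_independence_of_separated disj Hl))
    as [x0 [x1 [cl0 [cl1 Hpair]]]].
  assert (V0x0 : V0 (x0 e)).
  { apply NNPP; intro Hn.
    assert (Hopen : pow_open opK (fun x : G -> K => ~ V0 (x e)))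
      by (apply (pow_open_cylinder (g := e) (O := fun k => ~ V0 k)), compact_closed; auto).
    destruct (cl0 _ (nbhd_open Hopen Hn)) as [y [Hy [_ Vy]]]; auto. }
  assert (V1x1 : V1 (x1 e)).
  { apply NNPP; intro Hn.
    assert (Hopen : pow_open opK (fun x : G -> K => ~ V1 (x e)))
      by (apply (pow_open_cylinder (g := e) (O := fun k => ~ V1 k)), compact_closed; auto).
    destruct (cl1 _ (nbhd_open Hopen Hn)) as [y [Hy [_ Vy]]]; auto. }
  exists x0, x1. split; [|split; [|split]].
  - apply X_closed. intros U HU Ux. destruct (cl0 U (nbhd_open HU Ux)) as [y [Uy [Xy _]]]; eauto.
  - apply X_closed. intros U HU Ux. destruct (cl1 U (nbhd_open HU Ux)) as [y [Uy [Xy _]]]; eauto.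
  - intro E. rewrite E in V0x0. apply (disj _ V0x0 V1x1).
  - intros N0 N1 HN0 HN1 n. destruct (Hpair N0 N1 HN0 HN1 n) as [J [HJ [HnJ Hind]]].
    exists J. split; [|split]; auto. apply independence_set_iff.
    apply (independent_list_mono (B := fun x => N0 x /\ X x /\ V0 (x e))
                                 (C := fun x => N1 x /\ X x /\ V1 (x e))); auto;
      intros y [Ny [Xy _]]; auto.
Qed.

Theorem non_null_iff_separated_independence :
  non_null opK mul inv X <-> separated_independence.
Proof.
  split.
  - intros [x0 [x1 [_ [_ [Hne HIN]]]]]. apply (separated_of_IN_pair Hne HIN).
  - apply non_null_of_separated.
Qed.
End INPairs.

Lemma X_f_closed (G T K : Type) (opK : set K -> Prop) (mul : G -> G -> G)
  (act : G -> T -> T) (th0 : T) (f : T -> K) (x : G -> K) :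
  closure (pow_open opK) (X_f opK mul act th0 f) x -> X_f opK mul act th0 f x.
Proof. apply closure_closure. Qed.

Lemma X_f_shift_invariant (G T K : Type) (opK : set K -> Prop) (mul : G -> G -> G)
  (inv : G -> G) (e : G) (act : G -> T -> T) (th0 : T) (f : T -> K) :
  is_group mul inv e ->
  forall h x, X_f opK mul act th0 f x -> X_f opK mul act th0 f (shift mul h x).
Proof.
  intros group. apply (closure_shift_invariant group).
  intros h x [h' ->]. exists (mul h h'). apply (shift_shift group).
Qed.

Theorem mainTheorem9 (G T K : Type)
  (opG : set G -> Prop) (mul : G -> G -> G) (inv : G -> G) (e : G)
  (opT : set T -> Prop) (act : G -> T -> T)
  (opK : set K -> Prop) (th0 : T) (f : T -> K) :
  topological_group opG mul inv e ->
  is_topology opT -> compact opT -> hausdorff opT ->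
  is_action mul e act -> jointly_continuous opG opT act ->
  minimal opT act -> equicontinuous opT act ->
  is_topology opK -> compact opK -> hausdorff opK ->
  continuous_on opT opK (orbit act th0) f ->
  (forall th, closure opT (orbit act th0) th) ->
  invariant_under_no_rotation opT opK act th0 f ->
  (non_null opK mul inv (X_f opK mul act th0 f) <->
   exists V0 V1 : set K,
     compact_set opK V0 /\ compact_set opK V1 /\ (forall k, V0 k -> V1 k -> False) /\
     forall l : nat, exists g : nat -> G,
       forall a : nat -> bool, exists x, X_f opK mul act th0 f x /\
         forall i, i < l -> (if a i then V1 else V0) (x (g i))).
Proof.
  intros [_ [group _]] _ _ _ _ _ _ _ topK compK hausK _ _ _.
  apply (non_null_iff_separated_independence group topK compK hausK).
  - apply X_f_closed.
  - apply (X_f_shift_invariant group).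
Qed.
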